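(* Let $d$ and $\ell$ be positive integers and $q$ a prime power. Set $\operatorname{CGL}_d(q)^{(\ell)}=\{A_1\cdots A_\ell: A_i\in\operatorname{CGL}_d(q)\text{ for } i=1,\ldots,\ell\}\subseteq\operatorname{GL}_d(q)$. Then \[ \operatorname{CGL}_d(q)^{(\ell)}=\begin{cases}\operatorname{CGL}_d(q), & \ell=1,\\ \operatorname{GL}_d(q), & \ell\geq2\text{ and }(d,q)\notin\{(1,2),(1,3),(2,2)\},\\ \emptyset, & \ell\geq2\text{ and }(d,q)=(1,2),\\ \{(1)\}, & \ell\geq2\text{ and }(d,q)=(1,3),\\ \left\{\begin{pmatrix}1&0\\0&1\end{pmatrix},\begin{pmatrix}0&1\\1&1\end{pmatrix},\begin{pmatrix}1&1\\1&0\end{pmatrix}\right\}, & \ell\geq2\text{ and }(d,q)=(2,2).\end{cases} \]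
   Context: $\operatorname{GL}_d(q)$ is the group of invertible $(d\times d)$-matrices over $\mathbb{F}_q$, and $\operatorname{CGL}_d(q)$ is the set of matrices $A\in\operatorname{GL}_d(q)$ that do not have $-1$ as an eigenvalue (equivalently, $x\mapsto xA$ is a complete mapping of $\mathbb{F}_q^d$). *)

From HB Require Import structures.
From mathcomp Require Import all_boot all_order all_algebra all_fingroup all_field.
Set Implicit Arguments. Unset Strict Implicit. Unset Printing Implicit Defensive.
Import GRing.Theory.
Local Open Scope ring_scope.

Definition GLset (F : finFieldType) (d : nat) : {set 'M[F]_d} :=
  [set A : 'M[F]_d | A \in unitmx].

Definition CGL (F : finFieldType) (d : nat) : {set 'M[F]_d} :=
  [set A : 'M[F]_d | (A \in unitmx) && ~~ eigenvalue A (-1)].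

Definition CGLpow (F : finFieldType) (d l : nat) : {set 'M[F]_d} :=
  [set A : 'M[F]_d | [exists B : {ffun 'I_l -> 'M[F]_d},
     [forall i, B i \in CGL F d] && (A == \big[mulmx/1%:M]_(i < l) B i)]].

(* The matrix [[0,1],[1,1]]. *)
Definition M0111 (F : finFieldType) : 'M[F]_2 :=
  \matrix_(i < 2, j < 2) (if (i == 0 :> nat) && (j == 0 :> nat) then 0 else 1).
(* The matrix [[1,1],[1,0]]. *)
Definition M1110 (F : finFieldType) : 'M[F]_2 :=
  \matrix_(i < 2, j < 2) (if (i == 1 :> nat) && (j == 1 :> nat) then 0 else 1).

From HB Require Import structures.
From mathcomp Require Import all_boot all_order all_algebra all_fingroup all_field.
From mathcomp Require Import zify.
Import GRing.Theory.
Local Open Scope ring_scope.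

(* Call X addable when B + X is invertible for some B in CGL_d(q).  If X = A C^-k
   is addable, witnessed by B, then A = B (B^-1 X) C^k is a product of k + 2
   elements of CGL_d(q), because B^-1 X + 1 = B^-1 (B + X); any C in CGL_d(q) will
   do.  So for l >= 2 it suffices that every d x d matrix be addable.  A block
   triangular matrix is addable when its diagonal blocks are, so addability passes
   from dimensions m and n to m + n.  It holds in dimension 1 when q >= 4 (take B
   outside {0, -1, -x}), and a computer check settles dimensions 2, 3 for q = 3 and
   3, 4 for q = 2.  Over F_2 a unipotent conjugation and a shear bring the leading
   2 x 2 block to one with distinct diagonal entries or no off-diagonal ones, and
   all such blocks are addable: this gives the step from n to n + 2.  The exceptional
   cases are finite computations, e.g. CGL_2(2) = {M, M^2} with M^3 = 1. *)

Section MatrixIdentities.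
Context {R : pzRingType}.

Lemma mulmx_deltaE m n p (A : 'M[R]_(m, n)) k i j j' :
  (A *m delta_mx k i) j j' = A j k *+ (j' == i :> 'I_p).
Proof.
rewrite mxE (bigD1 k) //= big1 => [|l /negPf lk]; last by rewrite mxE lk mulr0.
by rewrite mxE eqxx /= mulr_natr addr0.
Qed.

Lemma delta_mulmxE m n p (A : 'M[R]_(n, p)) i k j j' :
  (delta_mx i k *m A) j j' = A k j' *+ (j == i :> 'I_m).
Proof.
rewrite mxE (bigD1 k) //= big1 => [|l /negPf lk]; last by rewrite mxE lk andbF mul0r.
by rewrite mxE eqxx andbT mulr_natl addr0.
Qed.

Lemma unipotent_conj_block m n (X11 : 'M[R]_m) (X22 : 'M[R]_n) U :
  block_mx 1%:M U 0 1%:M *m block_mx X11 0 0 X22 *m block_mx 1%:M (- U) 0 1%:M =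
  block_mx X11 (U *m X22 - X11 *m U) 0 X22.
Proof.
rewrite !mulmx_block !mulmx0 !mul0mx !mulmx1 !mul1mx !addr0 !add0r.
by rewrite mul0mx add0r mulmxN addrC.
Qed.

End MatrixIdentities.

Definition complete_mx {F : fieldType} {n} (B : 'M[F]_n) :=
  (B \in unitmx) && (B + 1%:M \in unitmx).

Definition addable {F : fieldType} {n} (X : 'M[F]_n) :=
  exists2 B, complete_mx B & B + X \in unitmx.

Definition all_addable (F : fieldType) n := forall X : 'M[F]_n, addable X.

Section Addability.
Context {F : fieldType}.

Lemma addable_conj n (P Q X : 'M[F]_n) :
  P *m Q = 1%:M -> addable (P *m X *m Q) -> addable X.
Proof.
move=> PQ [B /andP[uB uB1] uBX]; have QP := mulmx1C PQ.
have [uP uQ] := mulmx1_unit PQ.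
have conjD Y : Q *m (B + P *m Y *m Q) *m P = Q *m B *m P + Y.
  by rewrite mulmxDr mulmxDl; congr (_ + _); rewrite !mulmxA QP mul1mx -mulmxA QP mulmx1.
exists (Q *m B *m P); last by rewrite -conjD !unitmx_mul uQ uBX uP.
by rewrite /complete_mx !unitmx_mul uQ uB uP -(conjD 1%:M) mulmx1 PQ !unitmx_mul uQ uB1 uP.
Qed.

Lemma addable_trmx n (X : 'M[F]_n) : addable X^T -> addable X.
Proof.
case=> B /andP[uB uB1] uBX; exists B^T; last by rewrite -[X]trmxK -raddfD unitmx_tr.
by rewrite /complete_mx unitmx_tr uB -trmx1 -raddfD unitmx_tr.
Qed.

Lemma unitmx_lblock m n (A : 'M[F]_m) C (D : 'M[F]_n) :
  (block_mx A 0 C D \in unitmx) = (A \in unitmx) && (D \in unitmx).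
Proof. by rewrite !unitmxE det_lblock unitrM. Qed.

Lemma addable_block_shear {m n} (X11 : 'M[F]_m) X12 X21 (X22 : 'M[F]_n) W :
  addable (X11 - X12 *m W) -> addable X22 -> addable (block_mx X11 X12 X21 X22).
Proof.
move=> [B1 /andP[uB1 uB11] uY] [B2 /andP[uB2 uB21] uS].
exists (block_mx B1 0 ((B2 + X22) *m W - X21) B2).
  rewrite /complete_mx (scalar_mx_block m n) add_block_mx !addr0 !unitmx_lblock.
  by rewrite uB1 uB11 uB2 uB21.
have -> : block_mx B1 0 ((B2 + X22) *m W - X21) B2 + block_mx X11 X12 X21 X22 =
    block_mx (B1 + (X11 - X12 *m W)) X12 0 (B2 + X22) *m block_mx 1%:M 0 W 1%:M.
  by rewrite add_block_mx mulmx_block !mulmx0 !mulmx1 !add0r subrK addrA subrK.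
rewrite unitmx_mul unitmx_lblock !unitmx1 andbT unitmxE det_ublock unitrM -!unitmxE.
by rewrite uY uS.
Qed.

Lemma addable_block {m n} (X11 : 'M[F]_m) X12 X21 (X22 : 'M[F]_n) :
  addable X11 -> addable X22 -> addable (block_mx X11 X12 X21 X22).
Proof. by have := addable_block_shear X11 X12 X21 X22 0; rewrite mulmx0 subr0. Qed.

Lemma all_addable_add {m n} :
  all_addable F m -> all_addable F n -> all_addable F (m + n).
Proof. by move=> addable_m addable_n X; rewrite -(submxK X); apply: addable_block. Qed.

Definition distinct_diag_or_diag (Y : 'M[F]_2) :=
  (Y 0 0 != Y 1 1) || (Y 0 1 == 0) && (Y 1 0 == 0).

Section TwoByTwoBlock.
Context {n : nat}.
Hypothesis addable2 : forall Y : 'M[F]_2, distinct_diag_or_diag Y -> addable Y.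
Hypothesis addable_n : all_addable F n.+1.

Lemma addable_block_ur_neq0 (X11 : 'M[F]_2) X12 X21 (X22 : 'M[F]_n.+1) :
  X12 != 0 -> addable (block_mx X11 X12 X21 X22).
Proof.
case/matrix0Pn => i [k X12ik].
have [X11_eq | X11_neq] := eqVneq (X11 0 0) (X11 1 1); last first.
  by apply: addable_block (addable_n _); apply: addable2; rewrite /distinct_diag_or_diag X11_neq.
(* The shear W = delta_mx k i subtracts X12 i k from exactly one diagonal entry. *)
have shearE j j' : (X11 - X12 *m delta_mx k i) j j' = X11 j j' - X12 j k *+ (j' == i).
  by rewrite mxE [X in _ + X]mxE mulmx_deltaE.
apply: (addable_block_shear _ _ _ _ (delta_mx k i)) (addable_n _); apply: addable2.
rewrite /distinct_diag_or_diag !shearE X11_eq (inj_eq (addrI _)) eqr_opp.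
move: X12ik; have [-> | ->] : i = 0 \/ i = 1.
- by case: i {shearE} => [[|[|//]] ?]; [left | right]; apply: val_inj.
- by rewrite /= mulr1n => ->.
- by rewrite /= mulr1n eq_sym => ->.
Qed.

Lemma all_addable_add2 : all_addable F (2 + n.+1).
Proof.
move=> X; rewrite -(submxK X).
have [X12_0 | ] := eqVneq (ursubmx X) 0; last exact: addable_block_ur_neq0.
have [X21_0 | X21_neq0] := eqVneq (dlsubmx X) 0; last first.
  apply: addable_trmx; rewrite tr_block_mx; apply: addable_block_ur_neq0.
  by rewrite -trmx0 (inj_eq trmx_inj).
rewrite X12_0 X21_0; set X11 := ulsubmx X; set X22 := drsubmx X.
have [/addable2 addable11 | ] := boolP (distinct_diag_or_diag X11).
  exact: addable_block (addable_n _).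
rewrite negb_or negb_and => /andP[_ offdiag].
have [i [j [ji X11ji]]] : exists i j, j != i /\ X11 j i != 0.
  by case/orP: offdiag => ?; [exists 1, 0 | exists 0, 1].
(* Conjugating by [[1, U], [0, 1]] creates the nonzero upper right entry -X11 j i. *)
pose U : 'M[F]_(2, n.+1) := delta_mx i ord0.
apply: (@addable_conj _ (block_mx 1%:M U 0 1%:M) (block_mx 1%:M (- U) 0 1%:M)).
  by rewrite mulmx_block !mulmx1 !mul0mx !mulmx0 !addr0 !add0r mul1mx addNr -scalar_mx_block.
rewrite unipotent_conj_block; apply: addable_block_ur_neq0; apply/matrix0Pn.
exists j, ord0; rewrite mxE [X in _ + X]mxE mulmx_deltaE delta_mulmxE (negPf ji).
by rewrite eqxx mulr0n mulr1n sub0r oppr_eq0.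
Qed.

End TwoByTwoBlock.

End Addability.

Lemma all_addable1 {F : finFieldType} : (3 < #|F|)%N -> all_addable F 1.
Proof.
move=> F_gt3 X; pose x := X 0 0.
have [b] : exists b : F, b \notin [:: 0; -1; -x].
  apply/existsP; rewrite -negb_forall; apply: contraL F_gt3 => /forallP allb.
  rewrite -leqNgt (leq_trans _ (card_size [:: 0; -1; -x])) //.
  by apply/subset_leq_card/subsetP => b _; apply: allb.
rewrite !inE !negb_or => /and3P[b_neq0 b_neq1 b_neqx].
have unit_scalar (a : F) : ((a%:M : 'M_1) \in unitmx) = (a != 0).
  by rewrite unitmxE det_scalar1 unitfE.
exists b%:M; last by rewrite [X]mx11_scalar -raddfD unit_scalar addr_eq0.
by rewrite /complete_mx -raddfD !unit_scalar b_neq0 addr_eq0.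
Qed.

Section CGLProducts.
Context {F : finFieldType} {d : nat}.
Implicit Types (A B C P X : 'M[F]_d) (l : nat).

Lemma in_CGL B : (B \in CGL F d) = complete_mx B.
Proof.
rewrite inE /eigenvalue /eigenspace negbK /complete_mx.
have -> : B - (-1)%:M = B + 1%:M by rewrite raddfN opprK.
by rewrite kermx_eq0 row_free_unit.
Qed.

Lemma CGLpowP l A :
  reflect (exists2 B : {ffun 'I_l -> 'M[F]_d},
             forall i, B i \in CGL F d & A = \big[mulmx/1%:M]_(i < l) B i)
          (A \in CGLpow F d l).
Proof.
rewrite inE; apply: (iffP existsP) => [[B /andP[/forallP ? /eqP ->]] | [B ? ->]].
  by exists B.
by exists B; rewrite eqxx andbT; apply/forallP.
Qed.

Lemma CGLpow0 : CGLpow F d 0 = [set 1%:M].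
Proof.
apply/setP => A; rewrite in_set1; apply/CGLpowP/eqP => [[B _ ->] | ->].
  by rewrite big_ord0.
by exists [ffun => 1%:M]; [case | rewrite big_ord0].
Qed.

Lemma CGLpow1 : CGLpow F d 1 = CGL F d.
Proof.
apply/setP => A; apply/CGLpowP/idP => [[B CGL_B ->] | CGL_A].
  by rewrite big_ord_recl big_ord0 mulmx1.
by exists [ffun => A] => [i|]; rewrite ?big_ord_recl ?big_ord0 ?mulmx1 ffunE.
Qed.

Lemma CGLpow_cons l B P :
  B \in CGL F d -> P \in CGLpow F d l -> B *m P \in CGLpow F d l.+1.
Proof.
move=> CGL_B /CGLpowP[Bs CGL_Bs ->]; apply/CGLpowP.
exists [ffun i => if unlift ord0 i is Some j then Bs j else B].
  by move=> i; rewrite ffunE; case: unlift.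
rewrite big_ord_recl ffunE unlift_none; congr (_ *m _).
by apply: eq_bigr => i _; rewrite ffunE liftK.
Qed.

Lemma CGLpow_iter l {C} : C \in CGL F d -> iter l (mulmx C) 1%:M \in CGLpow F d l.
Proof.
move=> CGL_C; elim: l => [|l IHl]; first by rewrite CGLpow0 set11.
exact: CGLpow_cons.
Qed.

Lemma CGLpow_sub (S : {set 'M[F]_d}) l :
  1%:M \in S -> {in S &, forall A B, A *m B \in S} -> CGL F d \subset S ->
  CGLpow F d l \subset S.
Proof.
move=> S1 mulS /subsetP CGL_S; apply/subsetP => A /CGLpowP[B CGL_B ->].
by apply: (big_ind (fun M => M \in S)) => // i _; apply: CGL_S.
Qed.

Lemma CGLpow_GL l : CGLpow F d l \subset GLset F d.
Proof.
apply: CGLpow_sub; first by rewrite inE unitmx1.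
  by move=> A B; rewrite !inE unitmx_mul => -> ->.
by apply/subsetP => B; rewrite in_CGL inE => /andP[].
Qed.

Lemma CGLpow_eq0 l : CGL F d = set0 -> (0 < l)%N -> CGLpow F d l = set0.
Proof.
move=> CGL0 l_gt0; apply/setP => A; rewrite in_set0.
by apply/CGLpowP => -[B /(_ (Ordinal l_gt0))]; rewrite CGL0 in_set0.
Qed.

Lemma CGLpow_set1 l : CGL F d = [set 1%:M] -> CGLpow F d l = [set 1%:M].
Proof.
move=> CGL1; have pow1 : CGLpow F d l \subset [set 1%:M].
  apply: CGLpow_sub; rewrite ?CGL1 ?set11 //.
  by move=> A B /set1P-> /set1P->; rewrite mul1mx set11.
apply/eqP; rewrite eqEsubset pow1 sub1set.
have CGL_1 : 1%:M \in CGL F d by rewrite CGL1 set11.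
have powP := CGLpow_iter l CGL_1.
by have /(subsetP pow1)/set1P <- := powP.
Qed.

Lemma CGLpow_mul_addable l X P :
  X \in unitmx -> addable X -> P \in CGLpow F d l -> X *m P \in CGLpow F d l.+2.
Proof.
move=> uX [B /andP[uB uB1] uBX] powP.
have -> : X *m P = B *m ((invmx B *m X) *m P) by rewrite !mulmxA mulmxV ?mul1mx.
apply: CGLpow_cons; last apply: CGLpow_cons => //.
  by rewrite in_CGL /complete_mx uB uB1.
rewrite in_CGL /complete_mx unitmx_mul unitmx_inv uB uX.
by rewrite -[1%:M](mulVmx uB) -mulmxDr addrC unitmx_mul unitmx_inv uB uBX.
Qed.

Lemma CGLpow_all_addable l :
  (2 <= l)%N -> all_addable F d -> CGLpow F d l = GLset F d.
Proof.
move=> l_ge2 addableF; apply/eqP; rewrite eqEsubset CGLpow_GL /=.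
apply/subsetP => A; rewrite inE => uA.
rewrite -(subnK l_ge2) addn2; set k := (l - 2)%N.
have [C C_complete _] := addableF 0; have CGL_C : C \in CGL F d by rewrite in_CGL.
have powP := CGLpow_iter k CGL_C; set P := iter k _ _ in powP.
have uP : P \in unitmx by have /subsetP/(_ P powP) := CGLpow_GL k; rewrite inE.
rewrite -(mulmxKV uP A); apply: CGLpow_mul_addable => //.
by rewrite unitmx_mul uA unitmx_inv.
Qed.

End CGLProducts.

(* Matrices over a field of prime order p, encoded as lists of rows of naturals
   below p, so that finite checks run under vm_compute. *)
Definition code := seq (seq nat).

Definition code_entry (c : code) i j := nth 0%N (nth [::] c i) j.

Definition code_mk n (f : nat -> nat -> nat) : code := mkseq (fun i => mkseq (f i) n) n.

Definition code_one n := code_mk n (fun i j => nat_of_bool (i == j)).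

Definition code_add p n (c c' : code) :=
  code_mk n (fun i j => (code_entry c i j + code_entry c' i j) %% p)%N.

Definition code_mul p n (c c' : code) :=
  code_mk n (fun i j => sumn (mkseq (fun k => code_entry c i k * code_entry c' k j) n) %% p)%N.

Definition code_minor n (c : code) j := code_mk n (fun k l => code_entry c k.+1 (bump j l)).

(* Laplace expansion along the first row, with p.-1 standing for -1. *)
Fixpoint code_det p n (c : code) := match n with
  | 0 => 1%N
  | m.+1 => sumn (mkseq (fun j => (if odd j then p.-1 else 1) * code_entry c 0 j
                                   * code_det p m (code_minor m c j)) m.+1) %% p
  end%N.

Definition code_unit p n c := code_det p n c != 0%N.

Definition code_CGL p n c := code_unit p n c && code_unit p n (code_add p n c (code_one n)).

Fixpoint tuples {T} m (alts : seq T) : seq (seq T) :=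
  if m is m'.+1 then [seq x :: s | x <- alts, s <- tuples m' alts] else [:: [::]].

Definition codes p n : seq code := tuples n (tuples n (iota 0 p)).

(* vm_compute evaluates both arguments of [||], so [has] would always scan the whole list. *)
Fixpoint has_lazy {T} (a : pred T) (s : seq T) : bool :=
  if s is x :: s' then if a x then true else has_lazy a s' else false.

Definition code_addable p n (cs : seq code) c :=
  has_lazy (fun b => code_unit p n (code_add p n b c)) cs.

Definition mx_of_code {F : finFieldType} n (c : code) : 'M[F]_n :=
  \matrix_(i, j) (code_entry c i j)%:R.

Definition nat_repr {F : finFieldType} (x : F) := find (fun i => i%:R == x) (iota 0 #|F|).

Definition code_of_mx {F : finFieldType} {n} (X : 'M[F]_n) : code :=
  [seq [seq nat_repr (X i j) | j <- enum 'I_n] | i <- enum 'I_n].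

Lemma sumn_mkseq n (f : nat -> nat) : sumn (mkseq f n) = (\sum_(i < n) f i)%N.
Proof. by rewrite sumnE /mkseq big_map -val_enum_ord big_map enumT. Qed.

Lemma code_entry_mk n f i j :
  (i < n)%N -> (j < n)%N -> code_entry (code_mk n f) i j = f i j.
Proof. by move=> lt_in lt_jn; rewrite /code_entry nth_mkseq // nth_mkseq. Qed.

Lemma mem_tuples (T : eqType) m (alts : seq T) s :
  size s = m -> all (mem alts) s -> s \in tuples m alts.
Proof.
elim: s m => [|x s IHs] [|m] //= [size_s] /andP[alts_x alts_s].
by apply: allpairs_f => //; apply: IHs.
Qed.

Section PrimeField.
Context {F : finFieldType} {p : nat}.
Hypothesis charFp : p \in [pchar F].

Lemma mx_of_code1 n : mx_of_code n (code_one n) = 1%:M :> 'M[F]_n.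
Proof. by apply/matrixP => i j; rewrite !mxE code_entry_mk. Qed.

Lemma mx_of_code_add n c c' :
  mx_of_code n (code_add p n c c') = mx_of_code n c + mx_of_code n c' :> 'M[F]_n.
Proof. by apply/matrixP => i j; rewrite !mxE code_entry_mk // GRing.natr_mod_pchar // natrD. Qed.

Lemma mx_of_code_mul n c c' :
  mx_of_code n (code_mul p n c c') = mx_of_code n c *m mx_of_code n c' :> 'M[F]_n.
Proof.
apply/matrixP => i j; rewrite !mxE code_entry_mk // GRing.natr_mod_pchar // sumn_mkseq natr_sum.
by apply: eq_bigr => k _; rewrite !mxE natrM.
Qed.

Lemma det_mx_of_code n c : \det (mx_of_code n c : 'M[F]_n) = (code_det p n c)%:R.
Proof.
have p_prime := pcharf_prime charFp.
have m1E : p.-1%:R = -1 :> F.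
  by apply/eqP; rewrite -subr_eq0 opprK natr1 prednK ?prime_gt0 ?(pcharf0 charFp).
elim: n c => [|m IHm] c; first by rewrite det_mx00.
rewrite (expand_det_row _ ord0) -[code_det p m.+1 c]/(sumn _ %% p)%N -/code_det.
rewrite GRing.natr_mod_pchar // sumn_mkseq natr_sum; apply: eq_bigr => j _.
rewrite /cofactor !mxE.
have -> : row' ord0 (col' j (mx_of_code m.+1 c)) = mx_of_code m (code_minor m c j) :> 'M[F]_m.
  by apply/matrixP => k l; rewrite !mxE code_entry_mk // lift0.
rewrite IHm !natrM add0n -signr_odd mulrCA mulrA.
by case: (odd j); rewrite /= ?expr1 ?expr0 ?m1E.
Qed.

Lemma code_det_lt n c : (code_det p n c < p)%N.
Proof. by case: n => [|n]; rewrite ?prime_gt1 ?ltn_pmod ?prime_gt0 ?(pcharf_prime charFp). Qed.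

Lemma unitmx_of_code n c : ((mx_of_code n c : 'M[F]_n) \in unitmx) = code_unit p n c.
Proof.
rewrite unitmxE unitfE det_mx_of_code -(dvdn_pcharf charFp) /dvdn.
by rewrite modn_small ?code_det_lt.
Qed.

Lemma CGL_mx_of_code n c : (mx_of_code n c \in CGL F n) = code_CGL p n c.
Proof. by rewrite in_CGL /complete_mx -(mx_of_code1 n) -mx_of_code_add !unitmx_of_code. Qed.

Lemma addable_mx_of_code {n cs c} :
  all (code_CGL p n) cs -> code_addable p n cs c -> addable (mx_of_code n c : 'M[F]_n).
Proof.
move=> /allP CGL_cs.
have -> : code_addable p n cs c = has (fun b => code_unit p n (code_add p n b c)) cs.
  by rewrite /code_addable; elim: cs {CGL_cs} => //= b cs ->; case: ifP.
case/hasP => b cs_b unit_bc; exists (mx_of_code n b).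
  by rewrite -in_CGL CGL_mx_of_code CGL_cs.
by rewrite -mx_of_code_add unitmx_of_code.
Qed.

Hypothesis cardF : #|F| = p.

Lemma natr_ord_inj : injective (fun i : 'I_p => i%:R : F).
Proof.
suff le_eq (i j : 'I_p) : (i <= j)%N -> i%:R = j%:R :> F -> i = j.
  by move=> i j; case: (leqP i j) => [/le_eq // | /ltnW/le_eq eq_ji /esym/eq_ji].
move=> le_ij eq_ij; apply/val_inj/eqP; rewrite eqn_leq le_ij -subn_eq0 /=.
have p_dvd : (p %| j - i)%N by rewrite (dvdn_pcharf charFp) natrB // eq_ij subrr.
apply: contraT; rewrite -lt0n => /dvdn_leq/(_ p_dvd).
by rewrite leqNgt (leq_ltn_trans (leq_subr i j) (ltn_ord j)).
Qed.

Lemma nat_repr_spec (x : F) : (nat_repr x < p)%N /\ (nat_repr x)%:R = x.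
Proof.
rewrite /nat_repr cardF.
have /codomP[i ->] : x \in codom (fun i : 'I_p => i%:R : F).
  by apply: (inj_card_onto natr_ord_inj); rewrite card_ord cardF.
have has_i : has (fun k => k%:R == i%:R :> F) (iota 0 p).
  by apply/hasP; exists (val i); rewrite ?mem_iota ?ltn_ord.
have lt_p : (find (fun k => k%:R == i%:R :> F) (iota 0 p) < p)%N.
  by rewrite -[X in (_ < X)%N](size_iota 0 p) -has_find.
by split=> //; move: (nth_find 0%N has_i); rewrite nth_iota // => /eqP.
Qed.

Lemma code_entry_of_mx {n} (X : 'M[F]_n) (i j : 'I_n) :
  code_entry (code_of_mx X) i j = nat_repr (X i j).
Proof.
rewrite /code_entry /code_of_mx (nth_map i) ?size_enum_ord // nth_ord_enum.
by rewrite (nth_map j) ?size_enum_ord // nth_ord_enum.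
Qed.

Lemma code_of_mxK {n} (X : 'M[F]_n) : mx_of_code n (code_of_mx X) = X.
Proof. by apply/matrixP => i j; rewrite mxE code_entry_of_mx; case: (nat_repr_spec (X i j)). Qed.

Lemma code_of_mx_codes {n} (X : 'M[F]_n) : code_of_mx X \in codes p n.
Proof.
apply: mem_tuples; first by rewrite size_map size_enum_ord.
apply/allP => r /mapP[i _ ->]; apply: mem_tuples; first by rewrite size_map size_enum_ord.
by apply/allP => y /mapP[j _ ->]; rewrite /= mem_iota; case: (nat_repr_spec (X i j)).
Qed.

Lemma forall_mx_of_code n (P : 'M[F]_n -> Prop) :
  (forall c, c \in codes p n -> P (mx_of_code n c)) -> forall X, P X.
Proof. by move=> P_codes X; rewrite -(code_of_mxK X); apply/P_codes/code_of_mx_codes. Qed.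

Lemma all_addable_codes {n cs} :
  all (code_CGL p n) cs -> all (code_addable p n cs) (codes p n) -> all_addable F n.
Proof.
move=> CGL_cs /allP addable_cs; apply: forall_mx_of_code => c /addable_cs.
exact: addable_mx_of_code.
Qed.

End PrimeField.

Lemma pchar_prime_card {F : finFieldType} {p} : prime p -> #|F| = p -> p \in [pchar F].
Proof. by move=> p_prime cardF; apply: (card_finPcharP (n := 1)); rewrite ?expn1. Qed.

Definition addable_certificate p n (cs : seq code) :=
  all (code_CGL p n) cs && all (code_addable p n cs) (codes p n).

Lemma all_addable_certificate {F : finFieldType} {p n cs} :
  prime p -> #|F| = p -> addable_certificate p n cs -> all_addable F n.
Proof.
move=> p_prime cardF /andP[CGL_cs addable_cs].
exact: (all_addable_codes (pchar_prime_card p_prime cardF) cardF CGL_cs addable_cs).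
Qed.

(* Elements of CGL_n(p), found by a computer search, such that every n x n
   matrix over F_p is addable by one of them. *)
Definition witnesses_F2_3 : seq code := [::
  [::[::0;0;1];[::0;1;1];[::1;1;1]]; [::[::0;1;0];[::1;0;1];[::0;1;1]];
  [::[::1;1;1];[::1;0;0];[::1;0;1]]; [::[::1;0;1];[::0;0;1];[::1;1;0]];
  [::[::1;1;0];[::1;1;1];[::0;1;0]]; [::[::0;1;1];[::1;1;0];[::1;0;0]];
  [::[::1;1;0];[::0;1;1];[::1;1;1]]; [::[::0;0;1];[::1;0;1];[::1;1;1]];
  [::[::1;0;1];[::1;1;1];[::0;1;1]]; [::[::0;1;1];[::0;0;1];[::1;1;1]];
  [::[::1;0;1];[::0;0;1];[::1;1;1]]]%N.

Definition witnesses_F2_4 : seq code := [::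
  [::[::0;1;0;1];[::1;0;1;1];[::0;1;1;1];[::1;1;1;1]];
  [::[::1;0;1;0];[::1;0;0;0];[::1;1;0;1];[::1;0;1;1]];
  [::[::1;1;0;0];[::1;0;0;1];[::0;0;0;1];[::0;0;1;1]];
  [::[::0;0;0;1];[::0;1;1;1];[::1;1;0;0];[::1;0;0;1]];
  [::[::1;0;1;1];[::1;0;1;0];[::0;1;0;0];[::1;0;0;0]];
  [::[::1;1;0;0];[::0;1;0;1];[::1;1;1;1];[::0;0;1;0]];
  [::[::0;0;1;1];[::0;0;1;0];[::1;1;0;1];[::0;1;1;0]];
  [::[::0;0;1;0];[::1;1;1;1];[::0;1;1;0];[::1;1;0;0]];
  [::[::1;0;0;1];[::0;0;1;1];[::1;1;1;0];[::0;1;0;1]];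
  [::[::0;1;1;1];[::1;0;0;0];[::1;1;0;0];[::0;1;0;1]];
  [::[::0;1;0;0];[::1;1;1;1];[::1;0;1;0];[::1;0;0;0]];
  [::[::0;1;0;0];[::0;1;0;1];[::0;1;1;0];[::1;1;1;1]];
  [::[::1;1;0;1];[::0;1;0;1];[::1;0;1;0];[::1;1;1;0]];
  [::[::1;1;1;0];[::0;0;1;1];[::0;0;0;1];[::1;0;0;0]];
  [::[::1;0;1;0];[::1;1;1;0];[::1;0;0;1];[::1;1;1;1]];
  [::[::0;0;1;1];[::1;0;0;0];[::1;0;1;0];[::0;1;0;0]];
  [::[::0;1;1;1];[::0;0;1;0];[::0;0;0;1];[::1;0;1;0]];
  [::[::1;0;1;0];[::0;1;1;1];[::1;0;0;0];[::1;1;1;0]];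
  [::[::1;0;0;1];[::0;0;0;1];[::1;1;1;1];[::0;0;1;1]];
  [::[::1;1;1;1];[::1;0;0;1];[::1;1;0;0];[::0;1;1;1]];
  [::[::1;1;1;1];[::0;1;0;1];[::0;0;0;1];[::1;0;0;1]];
  [::[::0;1;0;1];[::0;0;1;0];[::0;0;1;1];[::1;1;1;1]];
  [::[::0;1;0;1];[::0;0;0;1];[::1;1;1;0];[::0;1;1;0]]]%N.

Definition witnesses_F3_2 : seq code :=
  [:: [::[::1;2];[::2;2]]; [::[::1;1];[::1;2]]; [::[::1;0];[::0;1]]; [::[::2;2];[::2;1]]]%N.

Definition witnesses_F3_3 : seq code := [::
  [::[::2;1;2];[::1;2;2];[::2;2;2]]; [::[::2;2;0];[::2;1;2];[::1;2;2]];
  [::[::1;2;1];[::2;0;2];[::0;2;2]]; [::[::2;2;2];[::2;2;0];[::0;1;2]];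
  [::[::1;1;2];[::0;0;2];[::1;0;0]]; [::[::2;1;2];[::0;0;1];[::1;1;2]];
  [::[::0;2;1];[::1;1;2];[::1;0;1]]; [::[::0;0;2];[::0;2;2];[::2;2;2]]]%N.

Lemma certificate_F2_3 : addable_certificate 2 3 witnesses_F2_3. Proof. by vm_compute. Qed.
Lemma certificate_F2_4 : addable_certificate 2 4 witnesses_F2_4. Proof. by vm_compute. Qed.
Lemma certificate_F3_2 : addable_certificate 3 2 witnesses_F3_2. Proof. by vm_compute. Qed.
Lemma certificate_F3_3 : addable_certificate 3 3 witnesses_F3_3. Proof. by vm_compute. Qed.

Definition code_0111 : code := [:: [:: 0; 1]; [:: 1; 1]]%N.
Definition code_1110 : code := [:: [:: 1; 1]; [:: 1; 0]]%N.
Definition CGL_F2_2_codes := [:: code_0111; code_1110].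
Definition F2_2_codes := code_one 2 :: CGL_F2_2_codes.

Definition code_distinct_diag_or_diag (c : code) :=
  (code_entry c 0 0 != code_entry c 1 1) ||
  (code_entry c 0 1 == 0%N) && (code_entry c 1 0 == 0%N).

Lemma certificate_F2_2_split :
  all (code_CGL 2 2) CGL_F2_2_codes &&
  all (fun c => code_distinct_diag_or_diag c ==> code_addable 2 2 CGL_F2_2_codes c)
      (codes 2 2).
Proof. by vm_compute. Qed.

Lemma CGL_F2_1_codes : all (fun c => ~~ code_CGL 2 1 c) (codes 2 1).
Proof. by vm_compute. Qed.

Lemma CGL_F3_1_codes : all (fun c => code_CGL 3 1 c ==> (c == code_one 1)) (codes 3 1).
Proof. by vm_compute. Qed.

Lemma CGL_F2_2_codes_sub : all (fun c => code_CGL 2 2 c ==> (c \in F2_2_codes)) (codes 2 2).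
Proof. by vm_compute. Qed.

Lemma F2_2_codes_mul_closed :
  all (fun a => all (fun b => code_mul 2 2 a b \in F2_2_codes) F2_2_codes) F2_2_codes.
Proof. by vm_compute. Qed.

Lemma F2_2_codes_div :
  all (fun a => all (fun b => has (fun x => [&& code_mul 2 2 x b == a, code_unit 2 2 x &
     code_addable 2 2 CGL_F2_2_codes x]) F2_2_codes) F2_2_codes) F2_2_codes.
Proof. by vm_compute. Qed.

Lemma addable_F2_2 {F : finFieldType} (Y : 'M[F]_2) :
  #|F| = 2 -> distinct_diag_or_diag Y -> addable Y.
Proof.
move=> cardF split_Y; have charF2 := pchar_prime_card (isT : prime 2) cardF.
have /andP[CGL_cs /allP addable_cs] := certificate_F2_2_split.
rewrite -(code_of_mxK charF2 cardF Y); apply: (addable_mx_of_code charF2 CGL_cs).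
apply: (implyP (addable_cs _ (code_of_mx_codes charF2 cardF Y))).
have reprK : cancel (@nat_repr F) (GRing.natmul 1) := fun x => (nat_repr_spec charF2 cardF x).2.
have repr0 : nat_repr (0 : F) = 0%N by rewrite /nat_repr cardF /= eqxx.
move: split_Y; rewrite /code_distinct_diag_or_diag.
rewrite !(code_entry_of_mx Y 0 0, code_entry_of_mx Y 1 1).
rewrite !(code_entry_of_mx Y 0 1, code_entry_of_mx Y 1 0).
by rewrite (inj_eq (can_inj reprK)) => /orP[-> // | /andP[/eqP-> /eqP->]]; rewrite repr0 orbT.
Qed.

Lemma CGL_F2_1 {F : finFieldType} : #|F| = 2 -> CGL F 1 = set0.
Proof.
move=> cardF; have charF2 := pchar_prime_card (isT : prime 2) cardF.
apply/setP; apply: (forall_mx_of_code charF2 cardF) => c /(allP CGL_F2_1_codes).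
by rewrite in_set0 (CGL_mx_of_code charF2) => /negbTE.
Qed.

Lemma CGL_F3_1 {F : finFieldType} : #|F| = 3 -> CGL F 1 = [set 1%:M].
Proof.
move=> cardF; have charF3 := pchar_prime_card (isT : prime 3) cardF.
apply/eqP; rewrite eqEsubset sub1set -(mx_of_code1 1) (CGL_mx_of_code charF3) andbT.
apply/subsetP; apply: (forall_mx_of_code charF3 cardF) => c /(allP CGL_F3_1_codes).
by rewrite (CGL_mx_of_code charF3) => /implyP CGL_c /CGL_c/eqP->; rewrite mx_of_code1 set11.
Qed.

Lemma mx_of_code_0111 (F : finFieldType) : mx_of_code 2 code_0111 = M0111 F.
Proof. by apply/matrixP => -[[|[|//]] ?] [[|[|//]] ?]; rewrite !mxE. Qed.

Lemma mx_of_code_1110 (F : finFieldType) : mx_of_code 2 code_1110 = M1110 F.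
Proof. by apply/matrixP => -[[|[|//]] ?] [[|[|//]] ?]; rewrite !mxE. Qed.

Lemma mem_F2_2_set (F : finFieldType) (A : 'M[F]_2) :
  reflect (exists2 c, c \in F2_2_codes & A = mx_of_code 2 c)
          (A \in [set 1%:M; M0111 F; M1110 F]).
Proof.
rewrite -mx_of_code_0111 -mx_of_code_1110 -(mx_of_code1 2) !inE -orbA.
apply: (iffP or3P) => [[] /eqP-> | [c]];
  [exists (code_one 2) | exists code_0111 | exists code_1110 | ]; rewrite ?inE ?eqxx ?orbT //.
by case/or3P => /eqP-> ->; [apply: Or31 | apply: Or32 | apply: Or33].
Qed.

Lemma CGLpow_F2_2_sub {F : finFieldType} l : #|F| = 2 ->
  CGLpow F 2 l \subset [set 1%:M; M0111 F; M1110 F].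
Proof.
move=> cardF; have charF2 := pchar_prime_card (isT : prime 2) cardF.
apply: CGLpow_sub; first by rewrite !inE eqxx.
  move=> _ _ /mem_F2_2_set[a Sa ->] /mem_F2_2_set[b Sb ->]; apply/mem_F2_2_set.
  exists (code_mul 2 2 a b); last by rewrite (mx_of_code_mul charF2).
  exact: allP (allP F2_2_codes_mul_closed a Sa) b Sb.
apply/subsetP; apply: (forall_mx_of_code charF2 cardF) => c /(allP CGL_F2_2_codes_sub).
by rewrite (CGL_mx_of_code charF2) => /implyP CGL_c /CGL_c Sc; apply/mem_F2_2_set; exists c.
Qed.

Lemma CGLpow_F2_2 {F : finFieldType} l : #|F| = 2 -> (2 <= l)%N ->
  CGLpow F 2 l = [set 1%:M; M0111 F; M1110 F].
Proof.
move=> cardF l_ge2; have charF2 := pchar_prime_card (isT : prime 2) cardF.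
apply/eqP; rewrite eqEsubset CGLpow_F2_2_sub //.
apply/subsetP => _ /mem_F2_2_set[a Sa ->].
have CGL_M : mx_of_code 2 code_0111 \in CGL F 2 by rewrite (CGL_mx_of_code charF2).
have powP := CGLpow_iter (l - 2) CGL_M.
have /mem_F2_2_set[b Sb eq_b] := subsetP (CGLpow_F2_2_sub _ cardF) _ powP.
have /hasP[x _ /and3P[/eqP <- unit_x addable_x]] := allP (allP F2_2_codes_div a Sa) b Sb.
rewrite -(subnK l_ge2) addn2 (mx_of_code_mul charF2) -eq_b.
apply: CGLpow_mul_addable => //; first by rewrite (unitmx_of_code charF2).
have /andP[CGL_cs _] := certificate_F2_2_split.
exact: (addable_mx_of_code charF2 CGL_cs).
Qed.

Lemma periodic_ind (P : nat -> Prop) b s : (0 < s)%N ->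
  (forall n, (b <= n < b + s)%N -> P n) -> (forall n, (b <= n)%N -> P n -> P (n + s)%N) ->
  forall n, (b <= n)%N -> P n.
Proof.
move=> s_gt0 base step; elim/ltn_ind => n IHn b_le_n.
have [n_lt | n_ge] := ltnP n (b + s); first by apply: base; rewrite b_le_n.
rewrite -(subnK (leq_trans (leq_addl b s) n_ge)); apply/step/IHn; lia.
Qed.

Lemma all_addable_F2 {F : finFieldType} d : #|F| = 2 -> (3 <= d)%N -> all_addable F d.
Proof.
move=> cardF; have certF2 := all_addable_certificate (isT : prime 2) cardF.
move: d; apply: (periodic_ind _ 3 2) => // n.
  move=> n_range; have [-> | ->] : n = 3%N \/ n = 4%N by lia.
    exact: certF2 certificate_F2_3.
  exact: certF2 certificate_F2_4.
move=> n_ge3; have -> : n = n.-1.+1 by lia.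
move=> addable_n; rewrite addnC.
by apply: all_addable_add2 addable_n => Y; apply: addable_F2_2.
Qed.

Lemma all_addable_F3 {F : finFieldType} d : #|F| = 3 -> (2 <= d)%N -> all_addable F d.
Proof.
move=> cardF; have certF3 := all_addable_certificate (isT : prime 3) cardF.
move: d; apply: (periodic_ind _ 2 2) => // n.
  move=> n_range; have [-> | ->] : n = 2%N \/ n = 3%N by lia.
    exact: certF3 certificate_F3_2.
  exact: certF3 certificate_F3_3.
by move=> _ addable_n; exact (all_addable_add addable_n (certF3 _ _ certificate_F3_2)).
Qed.

Lemma all_addable_gt3 {F : finFieldType} d : (3 < #|F|)%N -> (0 < d)%N -> all_addable F d.
Proof.
move=> F_gt3; move: d; apply: (periodic_ind _ 1 1) => // n.
  move=> n_range; have -> : n = 1%N by lia.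
  exact (all_addable1 F_gt3).
by move=> _ addable_n; exact (all_addable_add addable_n (all_addable1 F_gt3)).
Qed.

Lemma all_addable_nonexceptional {F : finFieldType} {d} : (0 < d)%N ->
  ~ ((d, #|F|) = (1, 2)%N \/ (d, #|F|) = (1, 3)%N \/ (d, #|F|) = (2, 2)%N) ->
  all_addable F d.
Proof.
move=> d_gt0 not_exc; have F_gt1 : (1 < #|F|)%N := card_finNzRing_gt1 F.
have [cardF | [cardF | F_gt3]] : #|F| = 2%N \/ #|F| = 3%N \/ (3 < #|F|)%N by lia.
- apply: (all_addable_F2 _ cardF); rewrite leqNgt; apply/negP => d_lt3; apply: not_exc.
  rewrite cardF; have [-> | ->] : d = 1%N \/ d = 2%N by lia.
    by left.
  by right; right.
- apply: (all_addable_F3 _ cardF); rewrite leqNgt; apply/negP => d_lt2; apply: not_exc.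
  by rewrite cardF (_ : d = 1%N); [right; left | lia].
- exact: all_addable_gt3.
Qed.

Theorem proposition3p1 (F : finFieldType) (q d l : nat)
  (hq : #|F| = q) (hd : (0 < d)%N) (hl : (0 < l)%N) :
  (l = 1%N -> CGLpow F d l = CGL F d) /\
  ((2 <= l)%N -> ~ ((d, q) = (1, 2)%N \/ (d, q) = (1, 3)%N \/ (d, q) = (2, 2)%N) ->
     CGLpow F d l = GLset F d) /\
  ((2 <= l)%N -> d = 1%N -> q = 2%N -> CGLpow F d l = set0) /\
  ((2 <= l)%N -> d = 1%N -> q = 3%N -> CGLpow F d l = [set 1%:M]) /\
  ((2 <= l)%N -> d = 2%N -> q = 2%N ->
     CGLpow F 2 l = [set 1%:M; M0111 F; M1110 F]).
Proof.
subst q; split; first by move->; exact: CGLpow1.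
split; first by move=> l_ge2 /(all_addable_nonexceptional hd); exact: CGLpow_all_addable.
split; first by move=> _ -> /CGL_F2_1 CGL0; exact: CGLpow_eq0.
split; first by move=> _ -> /CGL_F3_1; exact: CGLpow_set1.
by move=> l_ge2 _ cardF; exact: CGLpow_F2_2.
Qed.
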